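(* Let $A=\sigma(R)\langle x_1,\dots,x_n\rangle$ be a quasi-commutative bijective $\sigma$-PBW extension of $R$ (under the standing assumptions below). Then every submodule of $A^m$ has a Gröbner basis.
   Context: Let $R\subseteq A$ be rings. $A$ is a $\sigma$-PBW extension of $R$, written $A=\sigma(R)\langle x_1,\dots,x_n\rangle$, if there are $x_1,\dots,x_n\in A\setminus R$ such that: (i) $A$ is a free left $R$-module with basis $\mathrm{Mon}(A)=\{x^\alpha=x_1^{\alpha_1}\cdots x_n^{\alpha_n}:\alpha\in\mathbb N^n\}$, with $x^0=1$; (ii) for every $i$ and every $r\in R\setminus\{0\}$ there is $c_{i,r}\in R\setminus\{0\}$ with $x_ir-c_{i,r}x_i\in R$; (iii) for all $i,j$ there is $c_{i,j}\in R\setminus\{0\}$ with $x_jx_i-c_{i,j}x_ix_j\in R+Rx_1+\dots+Rx_n$. There are injective ring endomorphisms $\sigma_i$ of $R$ and $\sigma_i$-derivations $\delta_i$ with $x_ir=\sigma_i(r)x_i+\delta_i(r)$. Write $\sigma^\alpha=\sigma_1^{\alpha_1}\circ\cdots\circ\sigma_n^{\alpha_n}$ and $|\alpha|=\sum\alpha_i$. For $\alpha,\beta$ there are unique $c_{\alpha,\beta}\in R$ (left invertible) and $p_{\alpha,\beta}\in A$ with $x^\alpha x^\beta=c_{\alpha,\beta}x^{\alpha+\beta}+p_{\alpha,\beta}$, where $p_{\alpha,\beta}=0$ or $\deg p_{\alpha,\beta}<|\alpha+\beta|$. $A$ is quasi-commutative if $x_ir=c_{i,r}x_i$ and $x_jx_i=c_{i,j}x_ix_j$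 exactly. $A$ is bijective if each $\sigma_i$ is bijective and $c_{i,j}$ is invertible for $i<j$. Standing assumptions: $R$ is left Gröbner soluble (left Noetherian; left ideal membership decidable with computable coefficients; finite generating sets of left syzygy modules computable). $\mathrm{Mon}(A)$ carries a monomial order, i.e. a total order $\succeq$ with: (a) $x^\beta\succeq x^\alpha\Rightarrow lm(x^\gamma x^\beta x^\lambda)\succeq lm(x^\gamma x^\alpha x^\lambda)$; (b) $x^\alpha\succeq1$; (c) $|\beta|\ge|\alpha|\Rightarrow x^\beta\succeq x^\alpha$. $A^m$ is the free left $A$-module of column vectors with canonical basis $\mathbf e_i$. Monomials of $A^m$ are $x^\alpha\mathbf e_i$, with $\mathrm{ind}=i$, $\exp=\alpha$, $\deg=|\alpha|$. The monomial $x^\alpha\mathbf e_i$ divides $x^\beta\mathbf e_j$ iff $i=j$ and $\beta_k\ge\alpha_k$ for all $k$. $\mathrm{Mon}(A^m)$ carries a monomial order, i.e. a total order with: (i) $lm(x^\beta x^\alpha)\mathbf e_i\succeq x^\alpha\mathbf e_i$; (ii) $x^\beta\mathbf e_j\succeq x^\alpha\mathbf e_i\Rightarrow lm(x^\gamma x^\beta)\mathbf e_j\succeq lm(x^\gamma x^\alpha)\mathbf e_i$; (iii) $\deg\mathbf X\ge\deg\mathbf Y\Rightarrow\mathbf X\succeq\mathbf Y$. For nonzero $\mathbf f$, $lm(\mathbf f)$ and $lc(\mathbf f)$ denote its leading monomial and leading coefficient. Reduction. Let $F$ be a finite set of nonzero vectors and $\mathbf f\in A^m$. A one-step reduction of $\mathbf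 f$ by $F$ exists if there are $\mathbf f_1,\dots,\mathbf f_t\in F$ and $r_1,\dots,r_t\in R$ with: (1) $lm(\mathbf f_i)\mid lm(\mathbf f)$, with $\alpha_i+\exp(lm\,\mathbf f_i)=\exp(lm\,\mathbf f)$; (2) $lc(\mathbf f)=\sum r_i\sigma^{\alpha_i}(lc\,\mathbf f_i)c_{\alpha_i,\exp(lm\,\mathbf f_i)}$. $\mathbf f$ is reducible w.r.t. $F$ if such a reduction exists. Gröbner basis. For a submodule $M\neq0$ of $A^m$, a nonempty finite set $G$ of nonzero vectors of $M$ is a Gröbner basis for $M$ if every nonzero $\mathbf f\in M$ is reducible w.r.t. $G$; $\{0\}$ is a Gröbner basis of $M=0$. *)

From HB Require Import structures.
From mathcomp Require Import all_boot all_order all_algebra.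
Set Implicit Arguments. Unset Strict Implicit. Unset Printing Implicit Defensive.
Import GRing.Theory.
Local Open Scope ring_scope.

Definition mexp (n : nat) := {ffun 'I_n -> nat}.
Definition mexp0 (n : nat) : mexp n := [ffun => 0%N].
Definition mexp_add (n : nat) (a b : mexp n) : mexp n := [ffun i => (a i + b i)%N].
Definition mexp_unit (n : nat) (i : 'I_n) : mexp n := [ffun k => nat_of_bool (k == i)].
Definition mdeg (n : nat) (a : mexp n) : nat := (\sum_(i < n) a i)%N.

(* Total order (reflexive, antisymmetric, transitive, total); [le a b] reads "a ⪰ b". *)
Definition is_total_order (T : eqType) (le : rel T) : Prop :=
  reflexive le /\ antisymmetric le /\ transitive le /\ total le.

Section SigmaPBW.
Variables (A : nzRingType) (R : {pred A}) (n : nat) (x : 'I_n -> A).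
(* coef a alpha = coordinate of a on the basis element x^alpha *)
Variable (coef : A -> mexp n -> A).

Definition mon (a : mexp n) : A := \prod_(i < n) x i ^+ a i.

Definition is_subring : Prop :=
  1 \in R /\ (forall a b, a \in R -> b \in R -> a - b \in R) /\
  (forall a b, a \in R -> b \in R -> a * b \in R).

Definition free_basis_coord : Prop :=
  (forall a al, coef a al \in R) /\
  (forall a, exists s : seq (mexp n), uniq s /\
      (forall al, al \notin s -> coef a al = 0) /\
      a = \sum_(al <- s) coef a al * mon al) /\
  (forall (s : seq (mexp n)) (c : mexp n -> A), uniq s ->
      (forall al, al \in s -> c al \in R) ->
      \sum_(al <- s) c al * mon al = 0 -> forall al, al \in s -> c al = 0).

Definition in_lin1 (a : A) : Prop :=
  exists (d0 : A) (d : 'I_n -> A), d0 \in R /\ (forall k, d k \in R) /\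
    a = d0 + \sum_(k < n) d k * x k.

Definition sigma_PBW : Prop :=
  is_subring /\ free_basis_coord /\ (forall i, x i \notin R) /\
  (forall i r, r \in R -> r != 0 ->
     exists c, c \in R /\ c != 0 /\ x i * r - c * x i \in R) /\
  (forall i j, exists c, c \in R /\ c != 0 /\ in_lin1 (x j * x i - c * (x i * x j))).

Definition quasi_commutative : Prop :=
  (forall i r, r \in R -> r != 0 -> exists c, c \in R /\ c != 0 /\ x i * r = c * x i) /\
  (forall i j, exists c, c \in R /\ c != 0 /\ x j * x i = c * (x i * x j)).

(* sigma_i(r): x_i r = sigma_i(r) x_i + delta_i(r) *)
Definition sigma (i : 'I_n) (r : A) : A := coef (x i * r) (mexp_unit i).

Definition sigma_pow (al : mexp n) : A -> A :=
  foldr (fun i g => iter (al i) (sigma i) \o g) id (enum 'I_n).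

(* c_{alpha,beta}: x^alpha x^beta = c_{alpha,beta} x^{alpha+beta} + p_{alpha,beta} *)
Definition c_ab (al be : mexp n) : A := coef (mon al * mon be) (mexp_add al be).

Definition unit_in_R (a : A) : Prop :=
  exists u, u \in R /\ u * a = 1 /\ a * u = 1.

Definition bijective_ext : Prop :=
  (forall i, (forall r s, r \in R -> s \in R -> sigma i r = sigma i s -> r = s) /\
             (forall s, s \in R -> exists r, r \in R /\ sigma i r = s)) /\
  (forall i j : 'I_n, (i < j)%N ->
     exists c, c \in R /\ unit_in_R c /\ in_lin1 (x j * x i - c * (x i * x j))).

Definition left_ideal (I : A -> Prop) : Prop :=
  (forall a, I a -> a \in R) /\ I 0 /\ (forall a b, I a -> I b -> I (a + b)) /\
  (forall r a, r \in R -> I a -> I (r * a)).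

Definition left_noetherian : Prop :=
  forall I, left_ideal I -> exists s : seq A, (forall a, a \in s -> I a) /\
    forall a, I a -> exists c : nat -> A, (forall k, c k \in R) /\
      a = \sum_(k < size s) c k * s`_k.

(* Monomial order on Mon(A): [mo b a] means x^b ⪰ x^a. *)
Variable (mo : rel (mexp n)).

Definition is_lm (f : A) (mu : mexp n) : Prop :=
  coef f mu != 0 /\ forall nu, coef f nu != 0 -> mo mu nu.

Definition monomial_order : Prop :=
  is_total_order mo /\
  (forall al be ga la, mo be al -> forall mu nu,
      is_lm (mon ga * mon be * mon la) mu ->
      is_lm (mon ga * mon al * mon la) nu -> mo mu nu) /\
  (forall al, mo al (mexp0 n)) /\
  (forall al be, (mdeg al < mdeg be)%N -> mo be al).

Variable (m : nat).
(* Monomial order on Mon(A^m): a monomial x^alpha e_i is the pair (alpha, i). *)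
Variable (mo2 : rel (mexp n * 'I_m)).

Definition module_monomial_order : Prop :=
  is_total_order mo2 /\
  (forall al be (i : 'I_m) mu, is_lm (mon be * mon al) mu -> mo2 (mu, i) (al, i)) /\
  (forall al be ga (i j : 'I_m), mo2 (be, j) (al, i) -> forall mu nu,
      is_lm (mon ga * mon be) mu -> is_lm (mon ga * mon al) nu -> mo2 (mu, j) (nu, i)) /\
  (forall X Y : mexp n * 'I_m, (mdeg Y.1 < mdeg X.1)%N -> mo2 X Y).

(* lm(f) = x^(X.1) e_(X.2); then lc(f) = coef (f X.2 0) X.1 *)
Definition is_lmV (f : 'cV[A]_m) (X : mexp n * 'I_m) : Prop :=
  coef (f X.2 0) X.1 != 0 /\
  forall Y : mexp n * 'I_m, coef (f Y.2 0) Y.1 != 0 -> mo2 X Y.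

Definition reducible (F : seq 'cV[A]_m) (f : 'cV[A]_m) : Prop :=
  exists (mu : mexp n) (i : 'I_m), is_lmV f (mu, i) /\
  exists (t : nat) (g : 'I_t -> 'cV[A]_m) (r : 'I_t -> A) (al mu' : 'I_t -> mexp n),
    (forall k, g k \in F) /\ (forall k, r k \in R) /\
    (forall k, is_lmV (g k) (mu' k, i)) /\
    (forall k, mexp_add (al k) (mu' k) = mu) /\
    coef (f i 0) mu =
      \sum_(k < t) r k * sigma_pow (al k) (coef (g k i 0) (mu' k)) * c_ab (al k) (mu' k).

Definition is_submodule (M : 'cV[A]_m -> Prop) : Prop :=
  M 0 /\ (forall u v, M u -> M v -> M (u + v)) /\ (forall a v, M v -> M (a *: v)).

Definition groebner_basis (M : 'cV[A]_m -> Prop) (G : seq 'cV[A]_m) : Prop :=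
  ((forall v, M v -> v = 0) /\ G = [:: 0]) \/
  ((exists v, M v /\ v != 0) /\ G != [::] /\
   (forall g, g \in G -> M g /\ g != 0) /\
   (forall f, M f -> f != 0 -> reducible G f)).

End SigmaPBW.

From Pilot Require Import Defs.
From HB Require Import structures.
From mathcomp Require Import all_boot all_order all_algebra.
From mathcomp Require Import zify.
From Stdlib Require Import Classical ClassicalEpsilon.
Set Implicit Arguments. Unset Strict Implicit. Unset Printing Implicit Defensive.
Import GRing.Theory.
Local Open Scope ring_scope.

(* The leading coefficients reducible by a finite family [F] at a fixed leading monomial
   [x^mu e_i] form a left [R]-module. In a quasi-commutative bijective extension,
   [x^ga (a x^mu) = sigma^ga(a) c_{ga,mu} x^(ga+mu)] with [c_{ga,mu}] a unit and
   [sigma^ga] onto, so pulling these modules back along [a |-> sigma^ga(a) c_{ga,mu}]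
   turns growth of the leading monomial into inclusion of left ideals of [R].
   If no finite subset of [M] reduced all of [M], we could pick [f_0, f_1, ...] in [M]
   with [f_k] irreducible by [f_0, ..., f_(k-1)]. By Dickson's lemma a subsequence has
   leading monomials in one component, increasing for divisibility; the pulled-back ideals
   then form an ascending chain, which stabilizes since [R] is left Noetherian, and at that
   point the next leading coefficient is reducible: a contradiction. *)

Lemma exists_least_nat (P : nat -> Prop) :
  (exists v, P v) -> exists v, P v /\ forall w, P w -> (v <= w)%N.
Proof.
move=> [v Pv]; elim: v {-2}v (leqnn v) Pv => [|b IH] v le_vb Pv.
  by exists v; split=> // w _; move: le_vb; rewrite leqn0 => /eqP ->.
have [[w [Pw lt_wv]]|no_less] := classic (exists w, P w /\ (w < v)%N).
  by apply: (IH w) => //; rewrite -ltnS (leq_trans lt_wv).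
exists v; split=> // w Pw; rewrite leqNgt; apply/negP => lt_wv.
by apply: no_less; exists w.
Qed.

Lemma nondecreasing_subseq (u : nat -> nat) :
  exists phi : nat -> nat, {homo phi : j k / (j < k)%N} /\
    {homo u \o phi : j k / (j <= k)%N}.
Proof.
have least_after p : exists k, (p < k)%N /\ forall k', (p < k')%N -> (u k <= u k')%N.
  have values_after : exists v, exists k, (p < k)%N /\ u k = v by exists (u p.+1), p.+1.
  have [_ [[k [lt_pk <-]] min_v]] := exists_least_nat values_after.
  by exists k; split=> // k' lt_pk'; apply: min_v; exists k'.
have [next next_spec] := ClassicalEpsilon.choice _ least_after.
have next_gt p : (p < next p)%N by case: (next_spec p).
exists (fun j => iter j.+1 next 0); split.
  by apply: homo_ltn => [y z t /ltn_trans|j]; [apply | rewrite [X in (_ < X)%N]iterS].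
apply: homo_leq => [//|y z t /leq_trans|j /=]; first by apply.
set q := iter j next 0.
by apply: (next_spec q).2; apply: ltn_trans (next_gt q) (next_gt _).
Qed.

Lemma nondecreasing_subseq_fin (I : finType) (u : I -> nat -> nat) :
  exists phi : nat -> nat, {homo phi : j k / (j < k)%N} /\
    forall i, {homo u i \o phi : j k / (j <= k)%N}.
Proof.
suff [phi [phi_incr u_mono]] : exists phi : nat -> nat, {homo phi : j k / (j < k)%N} /\
    forall i, i \in enum I -> {homo u i \o phi : j k / (j <= k)%N}.
  by exists phi; split=> // i; apply: u_mono; rewrite mem_enum.
elim: (enum I) => [|i s [phi [phi_incr u_mono]]]; first by exists id; split.
have [psi [psi_incr ui_mono]] := nondecreasing_subseq (u i \o phi).
exists (phi \o psi); split=> [j k /psi_incr/phi_incr //|i'].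
rewrite inE => /orP [/eqP -> //|/u_mono ui'_mono j k].
by rewrite leq_eqVlt => /orP [/eqP -> //|/psi_incr/ltnW/ui'_mono].
Qed.

(* Dickson's lemma for the monomials [x^alpha e_i] of [A^m]: both [val i] and
   [m - val i] nondecreasing force the component index to be constant. *)
Lemma dickson_subseq (n m : nat) (s : nat -> mexp n * 'I_m) :
  exists phi : nat -> nat, {homo phi : j k / (j < k)%N} /\
    forall j k, (j <= k)%N -> (s (phi j)).2 = (s (phi k)).2 /\
      forall t, ((s (phi j)).1 t <= (s (phi k)).1 t)%N.
Proof.
pose u (c : 'I_n + bool) j := match c with
  | inl t => (s j).1 t
  | inr b => if b then val (s j).2 else (m - val (s j).2)%N end.
have [phi [phi_incr u_mono]] := nondecreasing_subseq_fin u.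
exists phi; split=> // j k le_jk; split=> [|t]; last exact: (u_mono (inl t)).
have := u_mono (inr true) _ _ le_jk; have := u_mono (inr false) _ _ le_jk => /=.
have := ltn_ord (s (phi j)).2; have := ltn_ord (s (phi k)).2.
by move=> ? ? ? ?; apply: ord_inj; lia.
Qed.

Lemma dependent_choice_seq (T : Type) (P : seq T -> T -> Prop) :
  (forall s, exists t, P s t) -> exists f : nat -> T, forall k, P (mkseq f k) (f k).
Proof.
move=> /ClassicalEpsilon.choice [pick pickP].
pose F k := iter k (fun s => rcons s (pick s)) [::].
exists (fun k => pick (F k)) => k; suff -> : mkseq (fun k => pick (F k)) k = F k by [].
by elim: k => // k IH; rewrite mkseqS IH.
Qed.

Lemma left_noetherian_acc (A : nzRingType) (R : {pred A}) (Q : nat -> A -> Prop) :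
  left_noetherian R -> (forall j, left_ideal R (Q j)) ->
  (forall j a, Q j a -> Q j.+1 a) -> exists J, forall a, Q J.+1 a -> Q J a.
Proof.
move=> noethR Q_ideal Q_incr.
have Q_mono j k a : (j <= k)%N -> Q j a -> Q k a.
  move=> le_jk; move: a; apply: (homo_leq (r := fun P P' => forall a, P a -> P' a)) le_jk.
  - by [].
  - by move=> P' P P'' PP' P'P'' a /PP'/P'P''.
  - exact: Q_incr.
pose U a := exists j, Q j a.
have U_ideal : left_ideal R U.
  split; first by move=> a [j]; apply: (Q_ideal j).1.
  split; first by exists 0%N; case: (Q_ideal 0%N) => _ [].
  split=> [a b [j Qa] [k Qb]|r a Rr [j Qa]]; last first.
    by exists j; case: (Q_ideal j) => _ [_ [_]]; apply.
  exists (maxn j k); case: (Q_ideal (maxn j k)) => _ [_ [QD _]].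
  by apply: QD; apply: Q_mono; [exact: leq_maxl | | exact: leq_maxr |].
have [gens [gensU gensP]] := noethR U U_ideal.
have [J gensQ] : exists J, forall a, a \in gens -> Q J a.
  elim: gens gensU {gensP} => [|b s IH] sU; first by exists 0%N.
  have [J1 QJ1] := IH (fun a sa => sU a (mem_behead (s := b :: s) sa)).
  have [J2 QJ2] := sU b (mem_head _ _).
  exists (maxn J1 J2) => a; rewrite inE => /orP [/eqP -> |sa].
    by apply: Q_mono QJ2; apply: leq_maxr.
  by apply: Q_mono (QJ1 a sa); apply: leq_maxl.
exists J => a QJ1a; have [c [Rc ->]] := gensP a (ex_intro _ J.+1 QJ1a).
case: (Q_ideal J) => _ [Q0 [QD QM]].
by apply: (big_ind (Q J)) => // k _; apply: QM => //; apply/gensQ/mem_nth.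
Qed.

Lemma mexp_addA n (a b c : mexp n) :
  mexp_add a (mexp_add b c) = mexp_add (mexp_add a b) c.
Proof. by apply/ffunP => t; rewrite !ffunE addnA. Qed.

Lemma mexp_add0 n (a : mexp n) : mexp_add (mexp0 n) a = a.
Proof. by apply/ffunP => t; rewrite !ffunE. Qed.

Definition mexp_sub n (a b : mexp n) : mexp n := [ffun t => (a t - b t)%N].

Lemma mexp_subK n (a b : mexp n) :
  (forall t, (b t <= a t)%N) -> mexp_add (mexp_sub a b) b = a.
Proof. by move=> le_ba; apply/ffunP => t; rewrite !ffunE subnK. Qed.

Lemma total_order_max (T : eqType) (le : rel T) (L : seq T) :
  is_total_order le -> L != [::] ->
  exists2 X, X \in L & forall Y, Y \in L -> le X Y.
Proof.
case=> le_refl [_ [le_trans le_total]]; elim: L => [//|Y0 L IH] _.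
have [->|/IH [X XL X_max]] := eqVneq L [::].
  by exists Y0 => [|Y]; rewrite ?mem_seq1 => // /eqP ->.
have [le_Y0X|le_XY0] := orP (le_total Y0 X).
  exists Y0 => [|Y]; rewrite ?inE ?eqxx // => /orP [/eqP -> //|/X_max].
  exact: le_trans.
by exists X => [|Y]; rewrite inE ?XL ?orbT // => /orP [/eqP ->|/X_max].
Qed.

Lemma big_uniq_supp (T : eqType) (V : nmodType) (s s' : seq T) (F : T -> V) :
  uniq s -> uniq s' -> (forall i, F i != 0 -> i \in s /\ i \in s') ->
  \sum_(i <- s) F i = \sum_(i <- s') F i.
Proof.
move=> uniq_s uniq_s' suppF; apply: perm_big_supp.
apply: uniq_perm; rewrite ?filter_uniq // => i; rewrite !mem_filter.
by case: (eqVneq (F i) 0) => //= /suppF [-> ->].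
Qed.


Lemma sigma_PBW_subring_closed (A : nzRingType) (R : {pred A}) (n : nat) (x : 'I_n -> A)
  (coef : A -> mexp n -> A) : sigma_PBW R x coef -> subring_closed R.
Proof. by case=> -[R1 [RB RM]] _; split. Qed.

Section SubringOfCoefficients.
Variables (A : nzRingType) (R : {pred A}).
Hypothesis subringR : subring_closed R.

HB.instance Definition _ := GRing.isSubringClosed.Build A R subringR.

Definition R_unit (a : A) := a \in R /\ unit_in_R R a.

Definition R_assoc (a b : A) := exists2 c, R_unit c & a = c * b.

Definition R_endo (f : A -> A) :=
  [/\ forall r, r \in R -> f r \in R, {morph f : a b / a + b},
      {in R &, {morph f : r s / r * s}} & f 1 = 1].

Definition R_onto (f : A -> A) := forall s, s \in R -> exists r, r \in R /\ f r = s.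

Definition twists (y : A) (f : A -> A) := forall r, r \in R -> y * r = f r * y.

Lemma R_unit1 : R_unit 1.
Proof. by split; [exact: rpred1 | exists 1; rewrite mulr1 rpred1]. Qed.

Lemma R_unitM a b : R_unit a -> R_unit b -> R_unit (a * b).
Proof.
move=> [Ra [u [Ru [ua au]]]] [Rb [v [Rv [vb bv]]]]; split; first exact: rpredM.
exists (v * u); split; first exact: rpredM.
by rewrite mulrA -(mulrA v) ua mulr1 vb -mulrA (mulrA b) bv mul1r au.
Qed.

Lemma R_endo0 f : R_endo f -> f 0 = 0.
Proof. by case=> _ fD _ _; apply/(@addrI _ (f 0)); rewrite -fD !addr0. Qed.

Lemma R_endo_comp f g : R_endo f -> R_endo g -> R_endo (f \o g).
Proof.
move=> [fR fD fM f1] [gR gD gM g1]; split=> [r /gR/fR //|a b /=|r s Rr Rs /=|/=].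
- by rewrite gD fD.
- by rewrite gM // fM ?gR.
- by rewrite g1 f1.
Qed.

Lemma R_endo_foldr (I : Type) (l : seq I) (f : I -> A -> A) :
  (forall i, R_endo (f i)) -> R_endo (foldr (fun i g => f i \o g) id l).
Proof. by move=> f_endo; elim: l => [|i l IH] //=; apply: R_endo_comp. Qed.

Lemma R_endo_iter k f : R_endo f -> R_endo (iter k f).
Proof. by move=> f_endo; elim: k => [//|k IH]; apply: (R_endo_comp f_endo IH). Qed.

Lemma R_endo_unit f a : R_endo f -> R_unit a -> R_unit (f a).
Proof.
move=> [fR _ fM f1] [Ra [u [Ru [ua au]]]]; split; first exact: fR.
by exists (f u); rewrite fR // -!fM // ua au f1.
Qed.

Lemma R_onto_comp f g : R_onto f -> R_onto g -> R_onto (f \o g).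
Proof. by move=> f_onto g_onto s /f_onto [r [/g_onto [q [Rq <-]] <-]]; exists q. Qed.

Lemma R_onto_foldr (I : Type) (l : seq I) (f : I -> A -> A) :
  (forall i, R_onto (f i)) -> R_onto (foldr (fun i g => f i \o g) id l).
Proof. by move=> f_onto; elim: l => [s Rs|i l IH] /=; [exists s | apply: R_onto_comp]. Qed.

Lemma R_onto_iter k f : R_onto f -> R_onto (iter k f).
Proof.
by move=> f_onto; elim: k => [s Rs|k IH]; [exists s | apply: (R_onto_comp f_onto IH)].
Qed.

Lemma twistsM y z f g : twists y f -> twists z g -> R_endo g -> twists (y * z) (f \o g).
Proof. by move=> yf zg [gR _ _ _] r Rr; rewrite -mulrA zg // mulrA yf ?gR // mulrA. Qed.

Lemma twistsX y f k : twists y f -> R_endo f -> twists (y ^+ k) (iter k f).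
Proof.
move=> yf f_endo; elim: k => [r _|k IH]; first by rewrite !expr0 mulr1 mul1r.
by move=> r Rr; rewrite exprSr iterSr; apply: (twistsM IH yf f_endo).
Qed.

Lemma twists_prod (I : Type) (l : seq I) (y : I -> A) (f : I -> A -> A) :
  (forall i, twists (y i) (f i)) -> (forall i, R_endo (f i)) ->
  twists (\prod_(i <- l) y i) (foldr (fun i g => f i \o g) id l).
Proof.
move=> yf f_endo; elim: l => [r _|i l IH]; first by rewrite big_nil mulr1 mul1r.
by rewrite big_cons; apply: twistsM IH (R_endo_foldr _ f_endo).
Qed.

Lemma R_assoc_refl a : R_assoc a a.
Proof. by exists 1; rewrite ?mul1r //; apply: R_unit1. Qed.

Lemma R_assoc_trans a b c : R_assoc a b -> R_assoc b c -> R_assoc a c.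
Proof. by move=> [u Uu ->] [v Uv ->]; exists (u * v); rewrite ?mulrA //; apply: R_unitM. Qed.

Lemma R_assoc_mulr a b z : R_assoc a b -> R_assoc (a * z) (b * z).
Proof. by move=> [u Uu ->]; exists u; rewrite ?mulrA. Qed.

Lemma R_assoc_mull a b y f :
  twists y f -> R_endo f -> R_assoc a b -> R_assoc (y * a) (y * b).
Proof.
move=> yf f_endo [u Uu ->]; exists (f u); first exact: R_endo_unit.
by rewrite mulrA yf ?mulrA //; case: Uu.
Qed.

Lemma R_assoc_commuteX y z f p : twists y f -> R_endo f ->
  R_assoc (y * z) (z * y) -> R_assoc (y ^+ p * z) (z * y ^+ p).
Proof.
move=> yf f_endo yz; elim: p => [|p IH].
  by rewrite !expr0 mul1r mulr1; apply: R_assoc_refl.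
rewrite exprSr -mulrA.
apply: R_assoc_trans (R_assoc_mull (twistsX p yf f_endo) (R_endo_iter p f_endo) yz) _.
by rewrite !mulrA; apply: R_assoc_mulr.
Qed.

Lemma R_assoc_commute_prod (I : eqType) (l : seq I) (y : I -> A) (f : I -> A -> A) z :
  (forall i, twists (y i) (f i)) -> (forall i, R_endo (f i)) ->
  (forall i, i \in l -> R_assoc (y i * z) (z * y i)) ->
  R_assoc ((\prod_(i <- l) y i) * z) (z * \prod_(i <- l) y i).
Proof.
move=> yf f_endo; elim: l => [_|i l IH yz].
  by rewrite big_nil mul1r mulr1; apply: R_assoc_refl.
rewrite big_cons -mulrA; apply: R_assoc_trans (R_assoc_mull (yf i) (f_endo i) (IH _)) _.
  by move=> j lj; apply: yz; rewrite inE lj orbT.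
by rewrite !mulrA; apply/R_assoc_mulr/yz/mem_head.
Qed.

Section PBWExtension.
Variables (n : nat) (x : 'I_n -> A) (coef : A -> mexp n -> A).
Hypothesis PBW : sigma_PBW R x coef.

Local Notation mon := (mon x).

Lemma coef_in a al : coef a al \in R.
Proof. by case: PBW => _ [[]]. Qed.

Lemma coef_supp a :
  exists2 s : seq (mexp n), uniq s & forall al, coef a al != 0 -> al \in s.
Proof.
case: PBW => _ [[_ [/(_ a) [s [uniq_s [supp_s _]]] _]] _].
by exists s => // al; apply: contraR => /supp_s ->; rewrite eqxx.
Qed.

Lemma coef_expand a (s : seq (mexp n)) : uniq s ->
  (forall al, coef a al != 0 -> al \in s) -> a = \sum_(al <- s) coef a al * mon al.
Proof.
move=> uniq_s supp_s.
case: PBW => _ [[_ [/(_ a) [s0 [uniq_s0 [supp_s0 {1}->]]] _]] _].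
apply: big_uniq_supp => // al; case: (eqVneq (coef a al) 0) => [->|nz _].
  by rewrite mul0r eqxx.
by split; [apply: contraR nz => /supp_s0 ->; rewrite eqxx | apply: supp_s].
Qed.

Lemma coef_lin_comb (s : seq (mexp n)) (c : mexp n -> A) :
  uniq s -> (forall al, al \in s -> c al \in R) -> forall mu,
  coef (\sum_(al <- s) c al * mon al) mu = if mu \in s then c mu else 0.
Proof.
move=> uniq_s Rc mu; set a := \sum_(al <- s) _.
have [s0 uniq_s0 supp_s0] := coef_supp a.
pose s1 := undup (s0 ++ s); pose c' al := if al \in s then c al else 0.
have s_s1 al : al \in s -> al \in s1 by rewrite mem_undup mem_cat orbC => ->.
have a_s1 : a = \sum_(al <- s1) coef a al * mon al.
  by apply: coef_expand (undup_uniq _) _ => al /supp_s0; rewrite mem_undup mem_cat => ->.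
have a_c' : a = \sum_(al <- s1) c' al * mon al.
  rewrite /a (eq_big_seq (fun al => c' al * mon al)) => [|al s_al]; last by rewrite /c' s_al.
  apply: big_uniq_supp (undup_uniq _) _ => // al; rewrite /c'.
  by case: ifP => [s_al _|_]; [rewrite s_s1 | rewrite mul0r eqxx].
have free_s1 := PBW.2.1.2.2 s1 (fun al => coef a al - c' al) (undup_uniq _).
have diff0 : \sum_(al <- s1) (coef a al - c' al) * mon al = 0.
  by rewrite (eq_bigr _ (fun al _ => mulrBl _ _ _)) sumrB -a_s1 -a_c' subrr.
case: (boolP (mu \in s1)) => [s1_mu|]; last first.
  rewrite mem_undup mem_cat negb_or => /andP [s0_mu /negbTE ->].
  by apply: contraNeq s0_mu => /supp_s0.
apply/eqP; rewrite -[if _ then _ else _]/(c' mu) -subr_eq0; apply/eqP.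
apply: free_s1 diff0 _ s1_mu => al _; rewrite rpredB ?coef_in // /c'.
by case: ifP => [/Rc|]; rewrite ?rpred0.
Qed.

Lemma coef_Rmon r mu nu : r \in R -> coef (r * mon mu) nu = if nu == mu then r else 0.
Proof.
move=> Rr; have := coef_lin_comb (s := [:: mu]) (c := fun _ => r) erefl (fun _ _ => Rr) nu.
by rewrite big_seq1 mem_seq1.
Qed.

Lemma coef0 nu : coef 0 nu = 0.
Proof.
have := coef_lin_comb (s := [::]) (c := fun _ => 0) erefl (fun _ _ => rpred0 _) nu.
by rewrite big_nil.
Qed.

Lemma coefD a b nu : coef (a + b) nu = coef a nu + coef b nu.
Proof.
have [sa _ supp_a] := coef_supp a; have [sb _ supp_b] := coef_supp b.
pose s := undup (sa ++ sb).
have [in_sa in_sb] : (forall al, al \in sa -> al \in s) /\ (forall al, al \in sb -> al \in s).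
  by split=> al; rewrite mem_undup mem_cat => ->; rewrite ?orbT.
rewrite {1}(coef_expand (undup_uniq (sa ++ sb)) (fun al nz => in_sa al (supp_a al nz))).
rewrite {1}(coef_expand (undup_uniq (sa ++ sb)) (fun al nz => in_sb al (supp_b al nz))).
rewrite -big_split /= (eq_bigr _ (fun al _ => esym (mulrDl _ _ _))).
rewrite coef_lin_comb ?undup_uniq // => [|al _]; last by rewrite rpredD ?coef_in.
case: ifP => // /negbT; rewrite mem_undup mem_cat negb_or => /andP [sa_nu sb_nu].
by rewrite (contraNeq (@supp_a nu) sa_nu) (contraNeq (@supp_b nu) sb_nu) addr0.
Qed.

Lemma coef_sum (I : Type) (s : seq I) (F : I -> A) nu :
  coef (\sum_(i <- s) F i) nu = \sum_(i <- s) coef (F i) nu.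
Proof. exact: (big_morph (coef^~ nu) (fun a b => coefD a b nu) (coef0 nu)). Qed.

Lemma mon0 : mon (mexp0 n) = 1.
Proof. by rewrite /Defs.mon big1 // => i _; rewrite ffunE expr0. Qed.

Lemma mon_unit i : mon (mexp_unit i) = x i.
Proof.
rewrite /Defs.mon (eq_bigr (fun k => if k == i then x k else 1)) => [|k _].
  by rewrite -big_mkcond big_pred1_eq.
by rewrite ffunE; case: (k == i); rewrite ?expr1 ?expr0.
Qed.

Lemma mon_enum al : mon al = \prod_(i <- enum 'I_n) x i ^+ al i.
Proof. by rewrite /Defs.mon [index_enum _]unlock enumT. Qed.

Lemma enum_ord_split (k : 'I_n) : exists l1 l2, enum 'I_n = l1 ++ k :: l2 /\
  k \notin l1 /\ k \notin l2 /\ (forall t, t \in l2 -> (k < t)%N).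
Proof.
have sorted_enum : pairwise ltn (map val (enum 'I_n)).
  by rewrite -sorted_pairwise ?val_enum_ord ?iota_ltn_sorted //; exact: ltn_trans.
move: (enum_uniq 'I_n) sorted_enum; case/splitPr: (mem_enum predT k) => l1 l2.
rewrite cat_uniq /= negb_or map_cat pairwise_cat /= => /and3P [_ /andP [kl1 _] /andP [kl2 _]].
move=> /and3P [_ _ /andP [/allP k_lt _]]; exists l1, l2; do !split=> //.
by move=> t l2t; apply: k_lt; apply: map_f.
Qed.

Lemma mon_split (k : 'I_n) l1 l2 (v : mexp n) : enum 'I_n = l1 ++ k :: l2 ->
  mon v = (\prod_(i <- l1) x i ^+ v i) * x k ^+ v k * \prod_(i <- l2) x i ^+ v i.
Proof. by move=> e; rewrite mon_enum e big_cat big_cons /= mulrA. Qed.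

Lemma prod_mexp_add_unit (l : seq 'I_n) (k : 'I_n) (v : mexp n) : k \notin l ->
  \prod_(i <- l) x i ^+ mexp_add v (mexp_unit k) i = \prod_(i <- l) x i ^+ v i.
Proof.
move=> kl; apply: eq_big_seq => t lt; rewrite !ffunE.
by case: eqP => [tk|]; [move: kl; rewrite -tk lt | rewrite addn0].
Qed.

Lemma mon_mulx_top (v : mexp n) (k : 'I_n) :
  (forall t : 'I_n, (k < t)%N -> v t = 0%N) ->
  mon v * x k = mon (mexp_add v (mexp_unit k)).
Proof.
move=> v_top; have [l1 [l2 [e [kl1 [kl2 l2_gt]]]]] := enum_ord_split k.
rewrite !(mon_split _ e) !prod_mexp_add_unit // !ffunE eqxx addn1.
have -> : \prod_(i <- l2) x i ^+ v i = 1.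
  by rewrite big1_seq // => t /andP [_ /l2_gt /v_top ->].
by rewrite !mulr1 exprSr mulrA.
Qed.

Hypotheses (QC : quasi_commutative R x) (BIJ : bijective_ext R x coef).

Local Notation sig := (sigma x coef).

Lemma x_twists i : twists (x i) (sig i).
Proof.
move=> r Rr; case: (eqVneq r 0) => [->|nz].
  by rewrite /sigma !mulr0 coef0 mul0r.
have [c [Rc [_ xr]]] := QC.1 i r Rr nz.
by rewrite /sigma xr -mon_unit coef_Rmon ?eqxx.
Qed.

Lemma sigma_R_endo i : R_endo (sig i).
Proof.
split=> [r _|a b|r s Rr Rs|].
- exact: coef_in.
- by rewrite /sigma mulrDr coefD.
- rewrite {1}/sigma mulrA x_twists // -mulrA x_twists // mulrA -mon_unit.
  by rewrite coef_Rmon ?rpredM ?coef_in ?eqxx.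
- by rewrite /sigma mulr1 -[x i]mul1r -mon_unit coef_Rmon ?rpred1 ?eqxx.
Qed.

Lemma sigma_pow_R_endo al : R_endo (sigma_pow x coef al).
Proof. by apply: R_endo_foldr => i; apply/R_endo_iter/sigma_R_endo. Qed.

Lemma sigma_pow_onto al : R_onto (sigma_pow x coef al).
Proof. by apply: R_onto_foldr => i; apply/R_onto_iter; exact: (BIJ.1 i).2. Qed.

Lemma mon_twists al : twists (mon al) (sigma_pow x coef al).
Proof.
rewrite mon_enum; apply: twists_prod => i; last exact/R_endo_iter/sigma_R_endo.
by apply: twistsX; [apply: x_twists | apply: sigma_R_endo].
Qed.

(* The constant of [x_t x_k = c x_k x_t] from quasi-commutativity must be the unit
   of the bijectivity axiom: comparing coefficients of [x_k x_t] in their difference. *)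
Lemma x_commute (k t : 'I_n) : (k < t)%N -> R_assoc (x t * x k) (x k * x t).
Proof.
move=> lt_kt; have [c [Rc [Uc [d0 [d [Rd0 [Rd lin]]]]]]] := BIJ.2 k t lt_kt.
have [c' [Rc' [_ xtxk]]] := QC.2 k t.
suff ec : c' = c by exists c; [split | rewrite -ec].
have xkxt : x k * x t = mon (mexp_add (mexp_unit k) (mexp_unit t)).
  rewrite -mon_unit mon_mulx_top // => t' lt_tt'; rewrite ffunE.
  by case: eqP => // ek; move: (ltn_trans lt_kt lt_tt'); rewrite ek ltnn.
set v := mexp_add _ _ in xkxt.
have ne_tk : (t == k) = false by apply/negbTE; apply: contraTneq lt_kt => ->; rewrite ltnn.
have := congr1 (coef^~ v) lin; rewrite xtxk -mulrBl xkxt coef_Rmon ?rpredB // eqxx.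
rewrite coefD coef_sum -[d0]mulr1 -mon0 coef_Rmon // big1 => [|j _].
  have -> : (v == mexp0 n) = false.
    by apply/negbTE/eqP => /(congr1 (fun f : mexp n => f k)); rewrite !ffunE eqxx.
  by rewrite addr0 => /eqP; rewrite subr_eq0 => /eqP.
rewrite -mon_unit coef_Rmon //; case: eqP => // /(congr1 (fun f : mexp n => (f k, f t))).
rewrite /v !ffunE !eqxx ne_tk eq_sym ne_tk.
by case: (k =P j) => // <-; rewrite ne_tk.
Qed.

Lemma prod_xpow_twists (l : seq 'I_n) (v : mexp n) :
  exists2 f, twists (\prod_(i <- l) x i ^+ v i) f & R_endo f.
Proof.
exists (foldr (fun i g => iter (v i) (sig i) \o g) id l).
  apply: twists_prod => i; last exact/R_endo_iter/sigma_R_endo.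
  by apply: twistsX; [apply: x_twists | apply: sigma_R_endo].
by apply: R_endo_foldr => i; apply/R_endo_iter/sigma_R_endo.
Qed.

Lemma mon_mulx (v : mexp n) (k : 'I_n) :
  R_assoc (mon v * x k) (mon (mexp_add v (mexp_unit k))).
Proof.
have [l1 [l2 [e [kl1 [kl2 l2_gt]]]]] := enum_ord_split k.
rewrite !(mon_split _ e) !prod_mexp_add_unit // !ffunE eqxx addn1.
set P1 := \prod_(i <- l1) _; set P2 := \prod_(i <- l2) _.
(* [x_k] moves left past the variables [x_t], [t > k], at the cost of units. *)
have P2_xk : R_assoc (P2 * x k) (x k * P2).
  apply: R_assoc_commute_prod (fun i => iter (v i) (sig i)) _ _ _ _ => [i|i|t /l2_gt lt_kt].
  - by apply: twistsX; [apply: x_twists | apply: sigma_R_endo].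
  - exact/R_endo_iter/sigma_R_endo.
  - by apply: R_assoc_commuteX (x_twists t) (sigma_R_endo t) (x_commute lt_kt).
have [f P1f f_endo] := prod_xpow_twists l1 v.
have sigk_endo := R_endo_iter (v k) (sigma_R_endo k).
have P1x_twists := twistsM P1f (twistsX (v k) (x_twists k) (sigma_R_endo k)) sigk_endo.
rewrite -mulrA.
apply: R_assoc_trans (R_assoc_mull P1x_twists (R_endo_comp f_endo sigk_endo) P2_xk) _.
by rewrite exprSr !mulrA; apply: R_assoc_refl.
Qed.

Lemma mon_mulX (v : mexp n) (k : 'I_n) p :
  R_assoc (mon v * x k ^+ p) (mon (mexp_add v [ffun t => ((t == k) * p)%N])).
Proof.
elim: p => [|p IH].
  rewrite expr0 mulr1 (_ : mexp_add _ _ = v); first exact: R_assoc_refl.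
  by apply/ffunP => t; rewrite !ffunE muln0 addn0.
rewrite exprSr mulrA; apply: R_assoc_trans (R_assoc_mulr (x k) IH) _.
apply: R_assoc_trans (mon_mulx _ k) _.
have -> : mexp_add (mexp_add v [ffun t => ((t == k) * p)%N]) (mexp_unit k) =
          mexp_add v [ffun t => ((t == k) * p.+1)%N].
  by apply/ffunP => t; rewrite !ffunE mulnS; case: (t == k); rewrite /= ?addn0 ?addn1 ?addnS.
exact: R_assoc_refl.
Qed.

Lemma mon_mul_prod (l : seq 'I_n) (b : mexp n) (v : mexp n) : uniq l ->
  R_assoc (mon v * \prod_(i <- l) x i ^+ b i)
          (mon (mexp_add v [ffun t => if t \in l then b t else 0%N])).
Proof.
elim: l v => [|i l IH] v.
  rewrite big_nil mulr1 (_ : mexp_add _ _ = v); first by move=> _; apply: R_assoc_refl.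
  by apply/ffunP => t; rewrite !ffunE addn0.
move=> /andP [il uniq_l]; rewrite big_cons mulrA.
apply: R_assoc_trans (R_assoc_mulr (\prod_(j <- l) x j ^+ b j) (mon_mulX v i (b i))) _.
apply: R_assoc_trans (IH _ uniq_l) _.
have -> : mexp_add (mexp_add v [ffun t => ((t == i) * b i)%N])
            [ffun t => if t \in l then b t else 0%N] =
          mexp_add v [ffun t => if t \in i :: l then b t else 0%N].
  apply/ffunP => t; rewrite !ffunE inE -addnA; congr (_ + _)%N.
  by case: (eqVneq t i) => [->|_]; rewrite ?(negbTE il) ?mul1n ?addn0.
exact: R_assoc_refl.
Qed.

Lemma mon_mul_R_assoc (al be : mexp n) :
  R_assoc (mon al * mon be) (mon (mexp_add al be)).
Proof.
rewrite [mon be]mon_enum; apply: R_assoc_trans (mon_mul_prod _ _ (enum_uniq _)) _.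
rewrite (_ : mexp_add _ _ = mexp_add al be); first exact: R_assoc_refl.
by apply/ffunP => t; rewrite !ffunE mem_enum.
Qed.

Lemma c_ab_spec (al be : mexp n) :
  R_unit (c_ab x coef al be) /\ mon al * mon be = c_ab x coef al be * mon (mexp_add al be).
Proof.
have [c Uc e] := mon_mul_R_assoc al be.
suff -> : c_ab x coef al be = c by [].
by rewrite /c_ab e coef_Rmon ?eqxx //; case: Uc.
Qed.

Lemma mon_mul (al be : mexp n) :
  mon al * mon be = c_ab x coef al be * mon (mexp_add al be).
Proof. by case: (c_ab_spec al be). Qed.

Lemma c_ab_unit (al be : mexp n) : R_unit (c_ab x coef al be).
Proof. by case: (c_ab_spec al be). Qed.

Definition shift_coef (al be : mexp n) (a : A) := sigma_pow x coef al a * c_ab x coef al be.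

Lemma shift_coef_in al be a : a \in R -> shift_coef al be a \in R.
Proof.
move=> Ra; rewrite rpredM //; last by case: (c_ab_unit al be).
by case: (sigma_pow_R_endo al) => /(_ a Ra).
Qed.

Lemma shift_coefD al be : {morph shift_coef al be : a b / a + b}.
Proof.
by move=> a b; rewrite /shift_coef; case: (sigma_pow_R_endo al) => _ -> _ _; rewrite mulrDl.
Qed.

Lemma shift_coef0 al be : shift_coef al be 0 = 0.
Proof. by rewrite /shift_coef (R_endo0 (sigma_pow_R_endo al)) mul0r. Qed.

Lemma shift_coefM al be r a : r \in R -> a \in R ->
  shift_coef al be (r * a) = sigma_pow x coef al r * shift_coef al be a.
Proof.
by move=> Rr Ra; rewrite /shift_coef; case: (sigma_pow_R_endo al) => _ _ -> // _; rewrite mulrA.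
Qed.

Lemma mon_mul_shift al be a : a \in R ->
  mon al * (a * mon be) = shift_coef al be a * mon (mexp_add al be).
Proof. by move=> Ra; rewrite mulrA mon_twists // -mulrA mon_mul mulrA. Qed.

(* Both sides are the coefficient of [x^(ga+al+be)] in [x^ga x^al a x^be]. *)
Lemma shift_coef_comp ga al be a : a \in R ->
  shift_coef ga (mexp_add al be) (shift_coef al be a) =
  c_ab x coef ga al * shift_coef (mexp_add ga al) be a.
Proof.
move=> Ra; set xa := mon ga * (mon al * (a * mon be)).
have xa_left : xa = shift_coef ga (mexp_add al be) (shift_coef al be a) *
                    mon (mexp_add ga (mexp_add al be)).
  by rewrite /xa mon_mul_shift // mon_mul_shift // shift_coef_in.
have xa_right : xa = (c_ab x coef ga al * shift_coef (mexp_add ga al) be a) *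
                     mon (mexp_add ga (mexp_add al be)).
  by rewrite /xa mulrA mon_mul -mulrA mon_mul_shift // mulrA mexp_addA.
have := congr1 (coef^~ (mexp_add ga (mexp_add al be))) (etrans (esym xa_left) xa_right).
rewrite /= !coef_Rmon ?eqxx ?shift_coef_in // rpredM ?shift_coef_in //.
by case: (c_ab_unit ga al).
Qed.

Lemma shift_coef_id be a : a \in R -> shift_coef (mexp0 n) be a = a.
Proof.
move=> Ra; rewrite /shift_coef /c_ab mon0 mul1r -[mon be]mul1r coef_Rmon ?rpred1 //.
rewrite mexp_add0 eqxx mulr1 /sigma_pow.
by elim: (enum 'I_n) => //= i l ->; rewrite ffunE.
Qed.

Lemma shift_coef_onto al be : R_onto (shift_coef al be).
Proof.
move=> y Ry; have [Rc [u [Ru [uc _]]]] := c_ab_unit al be.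
have [b [Rb sb]] := sigma_pow_onto al (rpredM Ry Ru).
by exists b; split=> //; rewrite /shift_coef sb -mulrA uc mulr1.
Qed.

Variables (m : nat) (mo2 : rel (mexp n * 'I_m)).
Local Notation vec := 'cV[A]_m.
Local Notation lmV := (is_lmV coef mo2).

(* A summand [r * sigma^al(lc g) * c_{al,be}] of condition (2) of a reduction. *)
Record red_term :=
  RedTerm { rt_coef : A; rt_vec : vec; rt_shift : mexp n; rt_exp : mexp n }.

Definition red_term_tuple (p : red_term) := (rt_coef p, rt_vec p, rt_shift p, rt_exp p).
Definition tuple_red_term (w : A * vec * mexp n * mexp n) :=
  RedTerm w.1.1.1 w.1.1.2 w.1.2 w.2.
Lemma red_term_tupleK : cancel red_term_tuple tuple_red_term. Proof. by case. Qed.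
HB.instance Definition _ := Equality.copy red_term (can_type red_term_tupleK).

Definition red_term_of (F : seq vec) (mu : mexp n) (i : 'I_m) (p : red_term) :=
  [/\ rt_coef p \in R, rt_vec p \in F, lmV (rt_vec p) (rt_exp p, i)
    & mexp_add (rt_shift p) (rt_exp p) = mu].

Definition red_value (i : 'I_m) (p : red_term) :=
  rt_coef p * shift_coef (rt_shift p) (rt_exp p) (coef (rt_vec p i 0) (rt_exp p)).

(* The values that condition (2) allows for [lc f] when [lm f = x^mu e_i]. *)
Definition red_span (F : seq vec) (mu : mexp n) (i : 'I_m) (a : A) :=
  exists2 s : seq red_term, {in s, forall p, red_term_of F mu i p} &
    a = \sum_(p <- s) red_value i p.

Lemma red_span0 F mu i : red_span F mu i 0.
Proof. by exists [::]; rewrite ?big_nil. Qed.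

Lemma red_spanD F mu i a b :
  red_span F mu i a -> red_span F mu i b -> red_span F mu i (a + b).
Proof.
move=> [s1 s1_ok ->] [s2 s2_ok ->]; exists (s1 ++ s2); last by rewrite big_cat.
by move=> p; rewrite mem_cat => /orP [/s1_ok|/s2_ok].
Qed.

Lemma red_spanZ F mu i r a : r \in R -> red_span F mu i a -> red_span F mu i (r * a).
Proof.
move=> Rr [s s_ok ->].
exists [seq RedTerm (r * rt_coef p) (rt_vec p) (rt_shift p) (rt_exp p) | p <- s].
  by move=> _ /mapP [p /s_ok [Rp Fp lm_p mu_p] ->]; split; rewrite ?rpredM.
by rewrite big_map mulr_sumr; apply: eq_bigr => p _; rewrite /red_value mulrA.
Qed.

Lemma red_span_subset F F' mu i a :
  {subset F <= F'} -> red_span F mu i a -> red_span F' mu i a.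
Proof. by move=> FF' [s s_ok ->]; exists s => // p /s_ok [? /FF' ? ? ?]. Qed.

Lemma red_span_shift F mu i ga a :
  red_span F mu i a -> red_span F (mexp_add ga mu) i (shift_coef ga mu a).
Proof.
move=> [s s_ok ->].
exists [seq RedTerm (sigma_pow x coef ga (rt_coef p) * c_ab x coef ga (rt_shift p))
          (rt_vec p) (mexp_add ga (rt_shift p)) (rt_exp p) | p <- s].
  move=> _ /mapP [p /s_ok [Rp Fp lm_p mu_p] ->]; split=> //=; last by rewrite -mexp_addA mu_p.
  rewrite rpredM //; last by case: (c_ab_unit ga (rt_shift p)).
  by case: (sigma_pow_R_endo ga) => /(_ _ Rp).
rewrite (big_morph _ (shift_coefD ga mu) (shift_coef0 ga mu)) big_map.
apply: eq_big_seq => p /s_ok [Rp _ _ <-].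
by rewrite /red_value /= shift_coefM ?shift_coef_in ?coef_in // shift_coef_comp ?coef_in // !mulrA.
Qed.

Lemma red_span_lc F g be i :
  g \in F -> lmV g (be, i) -> red_span F be i (coef (g i 0) be).
Proof.
move=> Fg lm_g; exists [:: RedTerm 1 g (mexp0 n) be].
  by move=> p; rewrite mem_seq1 => /eqP ->; split; rewrite ?rpred1 ?mexp_add0.
by rewrite big_seq1 /red_value /= shift_coef_id ?coef_in // mul1r.
Qed.

Lemma red_span_reducible F (f : vec) mu i :
  lmV f (mu, i) -> red_span F mu i (coef (f i 0) mu) -> reducible R x coef mo2 F f.
Proof.
move=> lm_f [s s_ok lc_f]; exists mu, i; split=> //.
pose p0 := RedTerm 0 0 (mexp0 n) (mexp0 n); pose p (k : 'I_(size s)) := nth p0 s k.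
have p_ok k : red_term_of F mu i (p k) by apply/s_ok/mem_nth.
exists (size s), (rt_vec \o p), (rt_coef \o p), (rt_shift \o p), (rt_exp \o p).
do 4?split=> [k|]; try by case: (p_ok k).
by rewrite lc_f (big_nth p0) big_mkord; apply: eq_bigr => k _; rewrite /red_value mulrA.
Qed.

Lemma reducible_nil (f : vec) : ~ reducible R x coef mo2 [::] f.
Proof.
move=> [mu [i [[lc_nz _] [[|t] [g [r [al [be [g_nil [_ [_ [_ lc_f]]]]]]]]]]]].
  by move: lc_nz; rewrite /= lc_f big_ord0 eqxx.
by have := g_nil ord0.
Qed.

Definition red_ideal (F : seq vec) (d mu0 : mexp n) (i : 'I_m) (a : A) :=
  a \in R /\ red_span F (mexp_add d mu0) i (shift_coef d mu0 a).

Lemma red_ideal_left_ideal F d mu0 i : left_ideal R (red_ideal F d mu0 i).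
Proof.
split; first by move=> a [].
split; first by rewrite /red_ideal shift_coef0 rpred0; split=> //; apply: red_span0.
split=> [a b [Ra sa] [Rb sb]|r a Rr [Ra sa]]; split; rewrite ?rpredD ?rpredM //.
  by rewrite shift_coefD; apply: red_spanD.
by rewrite shift_coefM //; apply: red_spanZ sa; case: (sigma_pow_R_endo d) => /(_ r Rr).
Qed.

(* Shifting by [e = d' - d] multiplies by the unit [c_{e,d}], which [red_spanZ] removes. *)
Lemma red_ideal_mono F F' (d d' : mexp n) mu0 i a :
  {subset F <= F'} -> (forall t, (d t <= d' t)%N) ->
  red_ideal F d mu0 i a -> red_ideal F' d' mu0 i a.
Proof.
move=> FF' le_dd' [Ra span_a]; split=> //; apply: red_span_subset FF' _.
have [_ [u [Ru [uc _]]]] := c_ab_unit (mexp_sub d' d) d.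
have := red_spanZ Ru (red_span_shift (mexp_sub d' d) span_a).
by rewrite shift_coef_comp // mulrA uc mul1r !mexp_addA mexp_subK.
Qed.

Hypothesis mo2_total : is_total_order mo2.

Lemma is_lmV_exists (f : vec) : f != 0 -> exists X, lmV f X.
Proof.
move=> f_nz; have [i fi_nz] : exists i, f i 0 != 0.
  apply/existsP; apply: contraR f_nz; rewrite negb_exists => /forallP f0.
  by apply/eqP/matrixP => i j; rewrite ord1 mxE; apply/eqP; move: (f0 i); rewrite negbK.
have [nu lc_nz] : exists nu, coef (f i 0) nu != 0.
  apply: NNPP => all0; move: fi_nz; rewrite (@coef_expand (f i 0) [::]) ?big_nil ?eqxx //.
  by move=> nu nz; case: all0; exists nu.
have /ClassicalEpsilon.choice [s s_supp] : forall j : 'I_m,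
    exists s : seq (mexp n), forall nu, coef (f j 0) nu != 0 -> nu \in s.
  by move=> j; have [s _ supp] := coef_supp (f j 0); exists s.
pose L := [seq X <- [seq (nu, j) | j <- enum 'I_m, nu <- s j] | coef (f X.2 0) X.1 != 0].
have L_supp X : coef (f X.2 0) X.1 != 0 -> X \in L.
  move=> nz; rewrite mem_filter nz; case: X nz => al j /s_supp al_s.
  by apply/allpairsPdep; exists j, al; rewrite mem_enum.
have [|X LX X_max] := total_order_max (L := L) mo2_total.
  by apply: contraTneq (L_supp (nu, i) lc_nz) => ->.
exists X; split=> [|Y /L_supp]; last exact: X_max.
by move: LX; rewrite mem_filter => /andP [].
Qed.

Hypothesis noethR : left_noetherian R.

Lemma no_bad_sequence (f : nat -> vec) : (forall k, f k != 0) ->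
  exists k, reducible R x coef mo2 (mkseq f k) (f k).
Proof.
move=> f_nz; apply: NNPP => no_red.
have f_in j k : (j < k)%N -> f j \in mkseq f k by move=> lt_jk; apply: map_f; rewrite mem_iota.
have mkseq_mono j k : (j <= k)%N -> {subset mkseq f j <= mkseq f k}.
  move=> le_jk g /mapP [l]; rewrite mem_iota => /andP [_ lt_lj] ->.
  by apply: f_in; apply: leq_trans le_jk.
have /ClassicalEpsilon.choice [X X_lm] : forall k, exists X, lmV (f k) X.
  by move=> k; apply: is_lmV_exists.
have [phi [phi_incr X_phi_mono]] := dickson_subseq X.
pose i0 := (X (phi 0%N)).2; pose mu0 := (X (phi 0%N)).1.
pose d j := mexp_sub (X (phi j)).1 mu0.
have X_phi j : X (phi j) = (mexp_add (d j) mu0, i0).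
  have [idx_eq le_X] := X_phi_mono 0%N j (leq0n j).
  by rewrite mexp_subK // /i0 idx_eq; case: (X (phi j)).
have d_mono j k t : (j <= k)%N -> (d j t <= d k t)%N.
  by move=> le_jk; have [_ le_X] := X_phi_mono j k le_jk; rewrite !ffunE leq_sub2r.
pose Q j := red_ideal (mkseq f (phi j).+1) (d j) mu0 i0.
have [J QJ] : exists J, forall a, Q J.+1 a -> Q J a.
  apply: left_noetherian_acc noethR (fun j => red_ideal_left_ideal _ _ _ _) _ => j a.
  apply: red_ideal_mono => [|t]; last exact: d_mono.
  by apply: mkseq_mono; rewrite ltnS ltnW // phi_incr.
pose k := phi J.+1.
have [b [Rb lc_b]] :=
  shift_coef_onto (d J.+1) mu0 (coef_in (f k i0 0) (mexp_add (d J.+1) mu0)).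
have Qb : Q J.+1 b.
  split=> //; rewrite lc_b; apply: red_span_lc (f_in _ _ (ltnSn k)) _.
  by rewrite -X_phi; apply: X_lm.
have [_ red_k] : red_ideal (mkseq f k) (d J.+1) mu0 i0 b.
  apply: red_ideal_mono (QJ b Qb) => [|t]; last exact: d_mono.
  exact/mkseq_mono/phi_incr.
apply: no_red; exists k; rewrite lc_b in red_k; apply: red_span_reducible red_k.
by rewrite -X_phi; apply: X_lm.
Qed.

Lemma groebner_basis_exists (M : vec -> Prop) : exists G, groebner_basis R x coef mo2 M G.
Proof.
have [M_nz|M0] := classic (exists v, M v /\ v != 0); last first.
  exists [:: 0]; left; split=> // v Mv.
  by case: (eqVneq v 0) => // v_nz; case: M0; exists v.
pose good (G : seq vec) := {in G, forall g, M g /\ g != 0}.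
have [[G [G_good G_red]]|no_G] :=
  classic (exists G, good G /\ forall f, M f -> f != 0 -> reducible R x coef mo2 G f).
  exists G; right; do !split=> //; have [v [Mv v_nz]] := M_nz.
  by apply/eqP => G0; apply: (@reducible_nil v); rewrite -G0; apply: G_red.
have extend s : exists t, good s -> [/\ M t, t != 0 & ~ reducible R x coef mo2 s t].
  have [s_good|] := classic (good s); last by exists 0.
  apply: NNPP => no_t; apply: no_G; exists s; split=> // t Mt t_nz.
  by apply: NNPP => t_irr; apply: no_t; exists t.
have [f f_bad] := dependent_choice_seq extend.
have f_good k : good (mkseq f k).
  elim: k => [//|k IH] g; rewrite mkseqS mem_rcons inE => /orP [/eqP ->|/IH //].
  by case: (f_bad k IH).
have [k red_k] := no_bad_sequence (fun k => let: And3 _ nz _ := f_bad k (f_good k) in nz).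
by case: (f_bad k (f_good k)) => _ _ /(_ red_k).
Qed.

End PBWExtension.
End SubringOfCoefficients.

Theorem corollary32 (A : nzRingType) (R : {pred A}) (n : nat) (x : 'I_n -> A)
  (coef : A -> mexp n -> A) (m : nat) (mo : rel (mexp n))
  (mo2 : rel (mexp n * 'I_m)) :
  sigma_PBW R x coef ->
  quasi_commutative R x ->
  bijective_ext R x coef ->
  left_noetherian R ->
  monomial_order x coef mo ->
  module_monomial_order x coef mo mo2 ->
  forall M : 'cV[A]_m -> Prop, is_submodule M ->
  exists G : seq 'cV[A]_m, groebner_basis R x coef mo2 M G.
Proof.
(* Only totality of the order on [Mon(A^m)] is needed, and [M] may be any set of vectors. *)
move=> PBW QC BIJ noethR _ [mo2_total _] M _.
exact: (groebner_basis_exists (sigma_PBW_subring_closed PBW) PBW QC BIJ mo2_total noethR M).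
Qed.
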